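(* Let $p$ be a prime and let $G$ be a finite Abelian $p$-group. Let $S$ be a sequence over $G$ with $|S|=\mathsf{D}(G)+i-1$, where $i\in\{1,2,\dots,p\}$, and let $\mathcal{A}$ be any subset of $\{1,2,\dots,p-1\}$ with exactly $i-1$ elements. Then $S$ contains a non-empty zero-sum subsequence $S'$ such that $|S'|\not\equiv b \pmod p$ for all $b\in\mathcal{A}$.
   Context: A sequence over a finite Abelian group $G$ (written additively) is a finite multiset of elements of $G$; its length $|S|$ is the number of terms counted with multiplicity, and a subsequence is a sub-multiset. A zero-sum sequence is one whose terms sum to $0$. The Davenport constant $\mathsf{D}(G)$ is the smallest positive integer $t$ such that every sequence over $G$ of length at least $t$ contains a non-empty zero-sum subsequence. *)

From mathcomp Require Import all_boot all_order all_algebra.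
Set Implicit Arguments. Unset Strict Implicit. Unset Printing Implicit Defensive.
Import GRing.Theory.
Local Open Scope ring_scope.

(* A sequence over G is a [seq G]; a subsequence (sub-multiset) is given by a
   set I of positions; its length is #|I| and its sum \sum_(k in I) S`_k. *)

Definition has_nonempty_zs (G : zmodType) (S : seq G) : Prop :=
  exists I : {set 'I_(size S)}, I != set0 /\ \sum_(k in I) S`_k = 0.

Definition davenport_constant (G : finZmodType) (D : nat) : Prop :=
  [/\ (0 < D)%N,
      (forall S : seq G, (D <= size S)%N -> has_nonempty_zs S) &
      (forall t : nat, (0 < t)%N ->
         (forall S : seq G, (t <= size S)%N -> has_nonempty_zs S) -> (D <= t)%N)].

From HB Require Import structures.
From mathcomp Require Import all_boot all_order all_algebra all_fingroup all_solvable.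
From mathcomp Require Import zify ring.
Set Implicit Arguments. Unset Strict Implicit. Unset Printing Implicit Defensive.
Import GRing.Theory.
Local Open Scope ring_scope.

(* In the group algebra F_p[G], (1 - X^x)^#[x] = 0 since #[x] is a power of
   p, and the 1 - X^(x_j) for a basis (x_j) of G generate the augmentation
   ideal; hence every product of more than d = sum_j (#[x_j] - 1) factors
   1 - X^g vanishes (Olson).  The basis elements taken with these
   multiplicities form a zero-sum free sequence, so d < D(G).  Expanding such
   a product over D(G) terms of S and reading off one coefficient shows that
   the signed number of subsequences with a given sum vanishes; by
   inclusion-exclusion, for |S| >= D(G) + t,
     sum over zero-sum T of (-1)^|T| 'C(|T|, t) = 0  in F_p,
   so the signed sum of q(|T|) over zero-sum T vanishes for every polynomial
   q of degree < i.  For q(c) = prod_(b in A) (c - b) the term of T = [] is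
   q(0) <> 0, so some non-empty zero-sum T has q(|T|) <> 0. *)

Section GroupRing.
Variables (G : finZmodType) (F : comNzRingType).

(* The group algebra F[G]: f stands for sum_g f g X^g, and the product is
   convolution. *)
Definition gring := {ffun G -> F}.
HB.instance Definition _ := GRing.Zmodule.on gring.

Definition gmul (f g : gring) : gring := [ffun x => \sum_y f y * g (x - y)].
Definition gone : gring := [ffun x => (x == 0)%:R].

Lemma gmulC : commutative gmul.
Proof.
move=> f g; apply/ffunP=> x; rewrite !ffunE.
rewrite (reindex_inj (can_inj (subKr x))) /=.
by apply: eq_bigr => y _; rewrite subKr mulrC.
Qed.

Lemma gmulA : associative gmul.
Proof.
move=> f g h; apply/ffunP=> x; rewrite !ffunE.
under eq_bigr => y _ do rewrite ffunE big_distrr /=.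
under [RHS]eq_bigr => w _ do rewrite ffunE big_distrl /=.
rewrite [RHS]exchange_big /=; apply: eq_bigr => y _.
rewrite [RHS](reindex_inj (addrI y)) /=; apply: eq_bigr => z _.
by rewrite mulrA [y + z]addrC addrK opprD addrA (addrAC x).
Qed.

Lemma gmul1 : left_id gone gmul.
Proof.
move=> f; apply/ffunP=> x; rewrite ffunE (bigD1 0) //= ffunE eqxx mul1r subr0.
by rewrite big1 ?addr0 // => y /negbTE ny; rewrite ffunE ny mul0r.
Qed.

Lemma gmulDl : left_distributive gmul +%R.
Proof.
move=> f g h; apply/ffunP=> x; rewrite !ffunE -big_split /=.
by apply: eq_bigr => y _; rewrite ffunE mulrDl.
Qed.

Lemma gone_neq0 : gone != 0.
Proof. by apply/eqP => /ffunP /(_ 0); rewrite !ffunE eqxx; apply/eqP; exact: oner_neq0. Qed.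

HB.instance Definition _ :=
  GRing.Zmodule_isComNzRing.Build gring gmulA gmulC gmul1 gmulDl gone_neq0.

Definition gX (g : G) : gring := [ffun x => (x == g)%:R].

Lemma gX0 : gX 0 = 1.
Proof. by apply/ffunP=> x; rewrite !ffunE. Qed.

Lemma gXD a b : gX (a + b) = gX a * gX b.
Proof.
apply/ffunP=> x; rewrite ffunE [RHS]ffunE (bigD1 a) //= !ffunE eqxx mul1r.
rewrite big1 ?addr0 => [|y /negbTE ny]; last by rewrite ffunE ny mul0r.
by rewrite subr_eq [b + a]addrC.
Qed.

Lemma gXMn g n : gX (g *+ n) = gX g ^+ n.
Proof. by elim: n => [|n IH]; rewrite ?mulr0n ?gX0 // mulrS exprS gXD IH. Qed.

Lemma prod_gX (I : finType) (W : {set I}) (s : I -> G) :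
  \prod_(k in W) gX (s k) = gX (\sum_(k in W) s k).
Proof. by rewrite (big_morph gX gXD gX0). Qed.

Lemma gring_signE m (f : gring) x : ((-1) ^+ m * f) x = (-1) ^+ m * f x.
Proof.
elim: m => [|m IH]; first by rewrite !expr0 !mul1r.
by rewrite !exprS !mulN1r !mulNr ffunE IH.
Qed.

Lemma prod_1subgX (I : finType) (U : {set I}) (s : I -> G) :
  \prod_(k in U) (1 - gX (s k)) =
  \sum_(W : {set I} | W \subset U) (-1) ^+ #|W| * gX (\sum_(k in W) s k).
Proof.
rewrite big_mkcond /=.
have splitE k : (if k \in U then 1 - gX (s k) else 1)
              = (if k \in U then - gX (s k) else 0) + 1.
  by case: ifP; rewrite ?add0r // addrC.
rewrite (eq_bigr _ (fun k _ => splitE k)) bigA_distr.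
rewrite (bigID (fun W : {set I} => W \subset U)) /=.
rewrite [X in _ + X]big1 ?addr0 => [|W /subsetPn[k kW kU]]; last first.
  by rewrite (bigD1 k) //= kW (negbTE kU) mul0r.
apply: eq_bigr => W WU; rewrite -prod_gX -prodrN [RHS]big_mkcond /=.
by apply: eq_bigr => k _; case: ifP => // kW; rewrite (subsetP WU k kW).
Qed.

Lemma coef_prod_1subgX (I : finType) (U : {set I}) (s : I -> G) h :
  (\prod_(k in U) (1 - gX (s k))) h =
  \sum_(W : {set I} | (W \subset U) && (\sum_(k in W) s k == h)) (-1) ^+ #|W|.
Proof.
rewrite prod_1subgX sum_ffunE big_mkcondr /=; apply: eq_bigr => W _.
by rewrite gring_signE ffunE eq_sym; case: eqP; rewrite ?mulr1 ?mulr0.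
Qed.

End GroupRing.

Lemma zmod_basis (G : finZmodType) : exists r (x : 'I_r -> G),
  (forall g : G, exists c : 'I_r -> nat, g = \sum_j x j *+ c j) /\
  (forall c : 'I_r -> nat, (forall j, c j < #[x j]%g)%N ->
     \sum_j x j *+ c j = 0 -> forall j, c j = 0%N).
Proof.
have [b defG _] := abelian_structure (FinRing.zmod_abelian [set: G]).
rewrite (big_nth 0) big_mkord in defG.
exists (size b), (fun j => b`_j); split.
  move=> g; have [c [cP gE _]] := mem_bigdprod defG (in_setT g).
  exists (fun j => sval (cyclePmin (cP j isT))); rewrite gE.
  by apply: eq_bigr => j _; case: (cyclePmin _).
move=> c cP s0 j.
have [c0 [_ _ uniq]] := mem_bigdprod defG (in_setT 0).
have cj := uniq (fun j => b`_j *+ c j) (fun j _ => mem_cycle _ _) (esym s0) j isT.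
have := uniq (fun j => 1%g) (fun j _ => group1 _); rewrite big1_eq.
move=> /(_ erefl j isT) onej.
have : (b`_j ^+ c j == 1)%g by apply/eqP; rewrite FinRing.zmodXgE cj onej.
rewrite -order_dvdn => /dvdn_leq; have := cP j; case: (c j) => // n.
by move=> lt_n /(_ isT); rewrite leqNgt lt_n.
Qed.

Section Olson.
Variables (p : nat) (G : finZmodType).
Hypotheses (pr_p : prime p) (pG : p.-nat #|G|).
Local Notation R := (gring G 'F_p).
Local Notation gX := (@gX G 'F_p).

Lemma gring_pchar : p \in [pchar R].
Proof.
rewrite inE pr_p /=; apply/eqP/ffunP => x; rewrite ffunMnE.
by rewrite (mulrn_pchar (pchar_Fp pr_p)) ffunE.
Qed.

Lemma expr_order_1subgX x : (1 - gX x) ^+ #[x]%g = 0.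
Proof.
have px : p.-nat #[x]%g.
  by apply: pnat_dvd pG; rewrite -cardsT order_dvdG ?inE.
have cx : [pchar R].-nat #[x]%g by rewrite (eq_pnat _ (pcharf_eq gring_pchar)).
rewrite exprDn_pchar // exprNn_pchar // expr1n -gXMn.
by rewrite -FinRing.zmodXgE expg_order gX0 subrr.
Qed.

Variables (r : nat) (x : 'I_r -> G).
Hypothesis gen_x : forall g : G, exists c : 'I_r -> nat, g = \sum_j x j *+ c j.

(* Membership in the ideal generated by the 1 - X^(x j), which is the whole
   augmentation ideal since the x j generate G. *)
Definition augI (f : R) := exists u : 'I_r -> R, f = \sum_j u j * (1 - gX (x j)).

Lemma augI0 : augI 0.
Proof. by exists (fun _ => 0); rewrite big1 // => j _; rewrite mul0r. Qed.

Lemma augID f g : augI f -> augI g -> augI (f + g).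
Proof.
move=> [u ->] [v ->]; exists (fun j => u j + v j); rewrite -big_split.
by apply: eq_bigr => j _; rewrite mulrDl.
Qed.

Lemma augIMl a f : augI f -> augI (a * f).
Proof.
move=> [u ->]; exists (fun j => a * u j); rewrite big_distrr.
by apply: eq_bigr => j _; exact: mulrA.
Qed.

Lemma augI_gen j : augI (1 - gX (x j)).
Proof.
exists (fun k => (k == j)%:R); rewrite (bigD1 j) //= eqxx mul1r big1 ?addr0 //.
by move=> k /negbTE ->; rewrite mul0r.
Qed.

Lemma augI_1subgX g : augI (1 - gX g).
Proof.
have [c ->] := gen_x g.
pose P h := augI (1 - gX h).
have P0 : P 0 by rewrite /P gX0 subrr; exact: augI0.
have PD a b : P a -> P b -> P (a + b).
  rewrite /P gXD => Pa Pb.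
  have -> : 1 - gX a * gX b = (1 - gX a) + gX a * (1 - gX b) by ring.
  exact: augID Pa (augIMl _ Pb).
apply: (big_ind P) => // j _; elim: (c j) => [|n IH]; first by rewrite mulr0n.
by rewrite mulrS; apply: PD IH; exact: augI_gen.
Qed.

Lemma prod_augI_gen_eq0 (I : finType) (U : {set I}) (f : I -> 'I_r) :
  (\sum_j (#[x j]%g - 1) < #|U|)%N -> \prod_(k in U) (1 - gX (x (f k))) = 0.
Proof.
move=> hU.
pose c j := #|[set k in U | f k == j]|.
have cardU : #|U| = (\sum_j c j)%N.
  transitivity (\sum_(k in U) 1)%N; first by rewrite sum1_card.
  rewrite (partition_big f predT) //=; apply: eq_bigr => j _.
  by rewrite -[c j]sum1_card; apply: eq_bigl => k; rewrite !inE.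
have [j le_ord_c] : exists j, (#[x j]%g <= c j)%N.
  apply/existsP; apply: contraTT hU; rewrite negb_exists => /forallP lt_c.
  rewrite -leqNgt cardU; apply: leq_sum => j _.
  by rewrite subn1 -ltnS prednK ?order_gt0 // ltnNge lt_c.
rewrite (partition_big f predT) //= (bigD1 j) //=.
suff -> : \prod_(k | (k \in U) && (f k == j)) (1 - gX (x (f k))) = 0.
  by rewrite mul0r.
rewrite (eq_bigr (fun=> 1 - gX (x j))) => [|k /andP[_ /eqP->] //].
rewrite prodr_const (eq_card (B := [set k in U | f k == j])) => [|k]; last first.
  by rewrite !inE.
by rewrite -/(c j) -(subnKC le_ord_c) exprD expr_order_1subgX mul0r.
Qed.

Lemma prod_1subgX_eq0 (I : finType) (U : {set I}) (s : I -> G) :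
  (\sum_j (#[x j]%g - 1) < #|U|)%N -> \prod_(k in U) (1 - gX (s k)) = 0.
Proof.
move=> hU; case: (posnP r) => [r0 | r_gt0].
  have [k0 k0U] : exists k0, k0 \in U.
    by apply/set0Pn; rewrite -card_gt0; apply: leq_ltn_trans hU.
  rewrite (bigD1 k0) //=; have [c ->] := gen_x (s k0).
  by rewrite big1 ?gX0 ?subrr ?mul0r // => j; have := ltn_ord j; rewrite {2}r0.
have [u defu] := fin_all_exists (fun k => augI_1subgX (s k)).
rewrite (eq_bigr _ (fun k _ => defu k)) (big_distr_big (Ordinal r_gt0)) /=.
apply: big1 => f _; rewrite big_split /= prod_augI_gen_eq0 ?mulr0 //.
Qed.

End Olson.

Section DavenportLowerBound.
Variables (G : finZmodType) (r : nat) (x : 'I_r -> G).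
Hypothesis indep_x : forall c : 'I_r -> nat, (forall j, c j < #[x j]%g)%N ->
  \sum_j x j *+ c j = 0 -> forall j, c j = 0%N.

Lemma basis_seq_zero_sum_free (S : seq G) (f : 'I_(size S) -> 'I_r) :
  (forall k : 'I_(size S), S`_k = x (f k)) ->
  (forall j, #|[set k | f k == j]| < #[x j]%g)%N -> ~ has_nonempty_zs S.
Proof.
move=> Sk lt_f [I [I0 sI]].
pose c j := #|[set k in I | f k == j]|.
have sumI : \sum_(k in I) S`_k = \sum_j x j *+ c j.
  rewrite (partition_big f predT) //=; apply: eq_bigr => j _.
  rewrite -sumr_const; apply: eq_big => [k | k /andP[_ /eqP <-]]; first by rewrite !inE.
  by rewrite Sk.
have lt_c j : (c j < #[x j]%g)%N.
  apply: leq_ltn_trans (lt_f j); apply: subset_leq_card.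
  by apply/subsetP => k; rewrite !inE => /andP[].
have [k kI] := set0Pn _ I0.
have /eqP := indep_x lt_c (etrans (esym sumI) sI) (f k).
by rewrite cards_eq0 => /eqP/setP/(_ k); rewrite !inE kI eqxx.
Qed.

Lemma davenport_gt_sum_orders D :
  davenport_constant G D -> (\sum_j (#[x j]%g - 1) < D)%N.
Proof.
move=> [D_gt0 DS _]; case: (posnP r) => [r0 | r_gt0].
  by rewrite big1 // => j; have := ltn_ord j; rewrite {2}r0.
pose j0 := Ordinal r_gt0.
pose L := flatten [seq nseq (#[x j]%g - 1) j | j <- enum 'I_r].
pose S := [seq x j | j <- L].
have sizeS : size S = (\sum_j (#[x j]%g - 1))%N.
  rewrite size_map size_flatten /shape -map_comp sumnE big_map big_enum /=.
  by apply: eq_bigr => j _; rewrite size_nseq.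
rewrite -sizeS ltnNge; apply/negP => /DS.
apply: (@basis_seq_zero_sum_free S (fun k => nth j0 L k)) => [k | j].
  by rewrite (nth_map j0) // -(size_map x) ltn_ord.
have -> : #|[set k : 'I_(size S) | nth j0 L k == j]| = count_mem j L.
  rewrite -sum1_card (eq_bigl (fun k : 'I_(size S) => nth j0 L k == j)) => [|k].
    rewrite -(big_mkord (fun k => nth j0 L k == j) (fun _ => 1%N)) size_map.
    by rewrite -(big_nth j0 (fun i => i == j) (fun _ => 1%N)) sum1_count.
  by rewrite inE.
rewrite count_flatten -map_comp sumnE big_map big_enum /= (bigD1 j) //=.
rewrite count_nseq /= eqxx mul1n big1 ?addn0 => [|i /negbTE ni].
  by rewrite subn1 ltn_predL order_gt0.
by rewrite count_nseq /= ni.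
Qed.

End DavenportLowerBound.

Lemma natr_ffact_mulB (R : nzRingType) (c t : nat) (a : R) :
  (c ^_ t)%:R * (c%:R - a) = (c ^_ t.+1)%:R + (t%:R - a) * (c ^_ t)%:R.
Proof.
have [lt_ct | le_tc] := ltnP c t.
  by rewrite !ffact_small ?mulr0 ?mul0r ?addr0 // (ltn_trans lt_ct).
rewrite ffactnSr natrM natrB // !mulrBr mulrBl -!natrM [(t * _)%N]mulnC.
by rewrite [a * _](commr_nat a) addrA subrK.
Qed.

(* The factor [c T ^_ t] loads the induction on [l]: [natr_ffact_mulB] trades
   a linear factor for a falling factorial of the next order. *)
Lemma sum_ffact_moments_eq0 (R : comNzRingType) (I : finType) (P : pred I)
    (w : I -> R) (c : I -> nat) m :
  (forall t, (t < m)%N -> \sum_(T | P T) w T * (c T ^_ t)%:R = 0) ->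
  forall (l : seq R) t, (t + size l < m)%N ->
  \sum_(T | P T) w T * ((c T ^_ t)%:R * \prod_(a <- l) ((c T)%:R - a)) = 0.
Proof.
move=> moments0; elim=> [|a l IHl] t /= lt_m.
  by under eq_bigr => T _ do rewrite big_nil mulr1; apply: moments0; rewrite -[t]addn0.
have stepE T : w T * ((c T ^_ t)%:R * \prod_(b <- a :: l) ((c T)%:R - b)) =
    w T * ((c T ^_ t.+1)%:R * \prod_(b <- l) ((c T)%:R - b)) +
    (t%:R - a) * (w T * ((c T ^_ t)%:R * \prod_(b <- l) ((c T)%:R - b))).
  by rewrite big_cons [X in w T * X]mulrA natr_ffact_mulB; ring.
rewrite (eq_bigr _ (fun T _ => stepE T)) big_split /= -big_distrr /=.
by rewrite !IHl ?mulr0 ?addr0 //; lia.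
Qed.

Section ZeroSumMoments.
Variables (p : nat) (G : finZmodType) (D : nat).
Hypotheses (pr_p : prime p) (pG : p.-nat #|G|) (dav : davenport_constant G D).
Variables (n : nat) (s : 'I_n -> G).

Lemma signed_count_subsets_sum_eq0 (U : {set 'I_n}) h : (D <= #|U|)%N ->
  \sum_(W : {set 'I_n} | (W \subset U) && (\sum_(k in W) s k == h))
     (-1) ^+ #|W| = 0 :> 'F_p.
Proof.
move=> DU; have [r [x [gen_x indep_x]]] := zmod_basis G.
have hU := leq_trans (davenport_gt_sum_orders indep_x dav) DU.
by rewrite -coef_prod_1subgX (prod_1subgX_eq0 pr_p pG gen_x) // ffunE.
Qed.

Lemma signed_count_zero_sum_supsets_eq0 (V : {set 'I_n}) : (D + #|V| <= n)%N ->
  \sum_(T : {set 'I_n} | (V \subset T) && (\sum_(k in T) s k == 0))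
     (-1) ^+ #|T| = 0 :> 'F_p.
Proof.
move=> hV.
rewrite (reindex_onto (fun W => V :|: W) (fun T => T :\: V)) /=; last first.
  by move=> T /andP[VT _]; rewrite -{2}(setID T V) (setIidPr VT).
have disjE (W : {set 'I_n}) : (W :\: V == W) = [disjoint V & W].
  by rewrite disjoint_sym; exact: (sameP eqP setDidPl).
transitivity (\sum_(W : {set 'I_n} | [disjoint V & W] &&
     (\sum_(k in W) s k == - \sum_(k in V) s k))
   ((-1) ^+ #|V| * (-1) ^+ #|W| : 'F_p)).
  apply: eq_big => [W | W].
    rewrite subsetUl /= setDUl setDv set0U disjE.
    case: (boolP [disjoint V & W]) => dVW; rewrite ?andbT ?andbF //.
    have -> : \sum_(k in V :|: W) s k = \sum_(k in V) s k + \sum_(k in W) s k.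
      by rewrite -bigU //; apply: eq_bigl => k; rewrite inE.
    by rewrite addrC addr_eq0.
  rewrite setDUl setDv set0U disjE => /andP[_ dVW].
  by rewrite -exprD cardsU; move: dVW; rewrite -setI_eq0 => /eqP->; rewrite cards0 subn0.
rewrite -big_distrr /=.
under eq_bigl => W do rewrite disjoint_sym disjoints_subset.
rewrite signed_count_subsets_sum_eq0 ?mulr0 //.
by have := cardsC V; rewrite card_ord; lia.
Qed.

Lemma zero_sum_binomial_moment_eq0 t : (D + t <= n)%N ->
  \sum_(T : {set 'I_n} | \sum_(k in T) s k == 0)
     (-1) ^+ #|T| * 'C(#|T|, t)%:R = 0 :> 'F_p.
Proof.
move=> le_tn.
(* Double counting over the pairs V \subset T with #|V| = t. *)
transitivity (\sum_(T : {set 'I_n}) \sum_(V : {set 'I_n} | #|V| == t)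
   (if (\sum_(k in T) s k == 0) && (V \subset T) then (-1) ^+ #|T| else 0) : 'F_p).
  rewrite big_mkcond; apply: eq_bigr => T _.
  case: eqP => _ /=; last by rewrite big1.
  rewrite -cards_draws -sumr_const big_distrr /= big_mkcond [RHS]big_mkcond /=.
  by apply: eq_bigr => V _; rewrite !inE mulr1; case: (V \subset T); case: (#|V| == t).
rewrite exchange_big /=; apply: big1 => V /eqP cardV.
rewrite -[RHS](signed_count_zero_sum_supsets_eq0 (V := V)) ?cardV //.
by rewrite [RHS]big_mkcond; apply: eq_bigr => T _; rewrite andbC.
Qed.

Lemma zero_sum_poly_moment_eq0 (l : seq 'F_p) : (D + size l <= n)%N ->
  \sum_(T : {set 'I_n} | \sum_(k in T) s k == 0)
     (-1) ^+ #|T| * \prod_(a <- l) (#|T|%:R - a) = 0.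
Proof.
move=> le_ln.
have ffact_moments t : (t < (size l).+1)%N ->
    \sum_(T : {set 'I_n} | \sum_(k in T) s k == 0) (-1) ^+ #|T| * (#|T| ^_ t)%:R = 0 :> 'F_p.
  move=> lt_tl; under eq_bigr => T _ do rewrite -bin_ffact natrM mulrA.
  rewrite -big_distrl /= zero_sum_binomial_moment_eq0 ?mul0r //.
  by apply: leq_trans le_ln; rewrite leq_add2l.
have := sum_ffact_moments_eq0 ffact_moments (l := l) (t := 0%N) (ltnSn _).
by under eq_bigr => T _ do rewrite ffactn0 mul1r.
Qed.

Lemma exists_zero_sum_prod_neq0 (l : seq 'F_p) :
  (D + size l <= n)%N -> \prod_(a <- l) (- a) != 0 ->
  exists T : {set 'I_n}, [/\ T != set0, \sum_(k in T) s k = 0 &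
                           \prod_(a <- l) (#|T|%:R - a) != 0].
Proof.
move=> le_ln prod_neq0.
have [/existsP[T /and3P[T0 /eqP sumT prodT]] | noT] := boolP [exists T : {set 'I_n},
    [&& T != set0, \sum_(k in T) s k == 0 & \prod_(a <- l) (#|T|%:R - a) != 0]].
  by exists T.
have /eqP := zero_sum_poly_moment_eq0 le_ln.
rewrite (bigD1 set0) ?big_set0 //= [X in _ + X]big1 ?addr0; last first.
  move=> T /andP[sumT T0]; move: noT; rewrite negb_exists => /forallP/(_ T).
  by rewrite T0 sumT negbK => /eqP->; rewrite mulr0.
rewrite cards0 expr0 mul1r.
by under eq_bigr => a _ do rewrite mulr0n sub0r; rewrite (negbTE prod_neq0).
Qed.

End ZeroSumMoments.

Theorem theorem2p3 (p : nat) (G : finZmodType) (D i : nat) (S : seq G)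
    (A : {set 'I_p}) :
  prime p -> p.-nat #|G| ->
  davenport_constant G D ->
  (1 <= i <= p)%N ->
  size S = (D + i - 1)%N ->
  (forall b : 'I_p, b \in A -> (0 < b)%N) ->
  #|A| = (i - 1)%N ->
  exists I : {set 'I_(size S)},
    [/\ I != set0, \sum_(k in I) S`_k = 0 &
        forall b : 'I_p, b \in A -> ~ (#|I| = b %[mod p])%N].
Proof.
move=> pr_p pG dav /andP[i_gt0 _] sizeS A_gt0 cardA.
pose l := [seq (nat_of_ord b)%:R : 'F_p | b <- enum A].
have le_lS : (D + size l <= size S)%N.
  by rewrite size_map -cardE cardA sizeS; lia.
have l_neq0 : \prod_(a <- l) (- a) != 0.
  rewrite big_map big_enum /=; apply/prodf_neq0 => b bA; rewrite oppr_eq0.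
  by rewrite -(dvdn_pcharf (pchar_Fp pr_p)) (gtnNdvd (A_gt0 b bA)).
have [I [I0 sumI prodI]] := exists_zero_sum_prod_neq0 pr_p pG dav
  (fun k : 'I_(size S) => S`_k) le_lS l_neq0.
exists I; split=> // b bA Ib; move: prodI.
rewrite big_map big_enum (bigD1 b) //= -(Fp_nat_mod pr_p #|I|) Ib (Fp_nat_mod pr_p).
by rewrite subrr mul0r eqxx.
Qed.
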